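(* Let $0<\alpha\le2$, $j\ne0$, $V\in C^2(\mathbb{T})$, and real numbers $p_1,\dots,p_n\ge0$, $q_1,\dots,q_n$ with $p_k^2+q_k^2>0$ for $1\le k\le n$. If $(c_1,d_1),(c_2,d_2)\in\mathcal{C}$ both solve the system (S), then $(c_1,d_1)=(c_2,d_2)$.
   Context: $\mathbb{T}=\mathbb{R}/\mathbb{Z}$. Set $c_j=(j^2/2)^{1/\alpha}$; $\phi_\alpha(t)=\frac{c_j\alpha}{\alpha-1}t^{(\alpha-1)/\alpha}$ if $\alpha\ne1$, $\phi_\alpha(t)=c_j\ln t$ if $\alpha=1$ ($t>0$). $\mathcal{C}\subset\mathbb{R}^{2n+1}$ is the set of $(a_0,\dots,a_n,b_1,\dots,b_n)$ with $a_0+\sum_{k=1}^n(a_k\cos(2\pi kx)+b_k\sin(2\pi kx))-V(x)>0$ for all $x\in\mathbb{T}$; on $\mathcal{C}$, $\Phi_\alpha(a_0,\dots,b_n)=\int_{\mathbb{T}}\phi_\alpha\big(a_0+\sum_{k=1}^n(a_k\cos(2\pi ky)+b_k\sin(2\pi ky))-V(y)\big)\,dy$. System (S): $\partial\Phi_\alpha/\partial a_0=1$, $\partial\Phi_\alpha/\partial a_k=\frac{p_ka_k+q_kb_k}{p_k^2+q_k^2}$, $\partial\Phi_\alpha/\partial b_k=\frac{p_kb_k-q_ka_k}{p_k^2+q_k^2}$ for $1\le k\le n$. *)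

From Stdlib Require Import Reals Lra ClassicalEpsilon.
Open Scope R_scope.

(* Riemann integral of f over [a,b], as a total function: the value of
   RiemannInt for any integrability proof (independent of the proof, by
   RiemannInt_P5); arbitrary if f is not Riemann integrable. *)
Definition Rint (f : R -> R) (a b : R) : R :=
  epsilon (inhabits 0)
    (fun I => exists pr : Riemann_integrable f a b, RiemannInt pr = I).

(* V is of class C^2 on R (and 1-periodic: a C^2 function on T = R/Z). *)
Definition C2_torus (V : R -> R) : Prop :=
  (forall x, V (x + 1) = V x) /\
  exists V1 V2 : R -> R,
    (forall x, derivable_pt_lim V x (V1 x)) /\
    (forall x, derivable_pt_lim V1 x (V2 x)) /\
    continuity V2.

Definition cj (alpha j : R) : R := Rpower (j ^ 2 / 2) (1 / alpha).

(* phi_alpha(t) for t > 0 (values for t <= 0 are irrelevant) *)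
Definition phi (alpha j t : R) : R :=
  if Req_EM_T alpha 1 then cj alpha j * ln t
  else cj alpha j * alpha / (alpha - 1) * Rpower t ((alpha - 1) / alpha).

(* a : coefficients a_0..a_n, b : coefficients b_1..b_n (other indices unused).
   trig n a b y = a_0 + sum_{k=1}^n (a_k cos(2 pi k y) + b_k sin(2 pi k y)) *)
Fixpoint trigsum (n : nat) (a b : nat -> R) (y : R) : R :=
  match n with
  | O => 0
  | S m => trigsum m a b y
           + (a (S m) * cos (2 * PI * INR (S m) * y)
              + b (S m) * sin (2 * PI * INR (S m) * y))
  end.

Definition trig (n : nat) (a b : nat -> R) (y : R) : R := a O + trigsum n a b y.

Definition inC (n : nat) (V : R -> R) (a b : nat -> R) : Prop :=
  forall x : R, trig n a b x - V x > 0.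

Definition Phi (alpha j : R) (n : nat) (V : R -> R) (a b : nat -> R) : R :=
  Rint (fun y => phi alpha j (trig n a b y - V y)) 0 1.

Definition upd (a : nat -> R) (k : nat) (x : R) : nat -> R :=
  fun i => if Nat.eqb i k then x else a i.

Definition solves_S (alpha j : R) (n : nat) (V : R -> R) (p q : nat -> R)
  (a b : nat -> R) : Prop :=
  derivable_pt_lim (fun t => Phi alpha j n V (upd a O (a O + t)) b) 0 1 /\
  (forall k, (1 <= k <= n)%nat ->
     derivable_pt_lim (fun t => Phi alpha j n V (upd a k (a k + t)) b) 0
       ((p k * a k + q k * b k) / (p k ^ 2 + q k ^ 2))) /\
  (forall k, (1 <= k <= n)%nat ->
     derivable_pt_lim (fun t => Phi alpha j n V a (upd b k (b k + t))) 0
       ((p k * b k - q k * a k) / (p k ^ 2 + q k ^ 2))).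

From Stdlib Require Import Reals Lra Lia Psatz ClassicalEpsilon FunctionalExtensionality.
From Coquelicot Require Import Coquelicot.
Open Scope R_scope.

(* Write F = trig - V for the profile of a point of C.  Differentiating under
   the integral, (S) prescribes the moments of phi'(F) = c_j F^(-1/alpha)
   against 1, cos(2 pi k y) and sin(2 pi k y) as affine functions of the
   coefficients.  For two solutions, G = phi'(F1) - phi'(F2) paired with
   F1 - F2 therefore integrates to sum_k p_k (da_k^2 + db_k^2) / (p_k^2 + q_k^2),
   which is >= 0; but phi' is strictly decreasing, so G (F1 - F2) <= 0 with
   equality only where F1 = F2.  Hence F1 = F2 on (0,1): the moments agree,
   the coefficients of index k >= 1 follow by inverting the similarity
   (p_k, q_k), and then a_0 follows by evaluating the profiles at a point. *)

Lemma continuity_pt_cst (k x : R) : continuity_pt (fun _ => k) x.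
Proof. apply continuity_pt_const. intros ? ?; reflexivity. Qed.

Lemma continuity_pt_cos_mul (w x : R) : continuity_pt (fun y => cos (w * y)) x.
Proof.
  apply (continuity_pt_comp (fun y => w * y) cos); [|apply continuity_cos].
  apply continuity_pt_mult; [apply continuity_pt_cst | apply continuity_pt_id].
Qed.

Lemma continuity_pt_sin_mul (w x : R) : continuity_pt (fun y => sin (w * y)) x.
Proof.
  apply (continuity_pt_comp (fun y => w * y) sin); [|apply continuity_sin].
  apply continuity_pt_mult; [apply continuity_pt_cst | apply continuity_pt_id].
Qed.

Lemma continuity_pt_trigsum n a b x : continuity_pt (trigsum n a b) x.
Proof.
  induction n as [|n IH]; simpl; [apply continuity_pt_cst|].
  apply (continuity_pt_plus (trigsum n a b)); [exact IH|].
  apply continuity_pt_plus; apply continuity_pt_mult;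
    auto using continuity_pt_cst, continuity_pt_cos_mul, continuity_pt_sin_mul.
Qed.

Lemma C2_torus_continuity V : C2_torus V -> forall x, continuity_pt V x.
Proof.
  intros [_ [V1 [_ [HV1 _]]]] x.
  apply derivable_continuous_pt. exists (V1 x). apply HV1.
Qed.

Ltac solve_continuity :=
  repeat match goal with
  | |- forall _, _ => intro
  | |- continuity_pt (fun _ => _ + _) _ => apply continuity_pt_plus
  | |- continuity_pt (fun _ => _ - _) _ => apply continuity_pt_minus
  | |- continuity_pt (fun _ => _ * _) _ => apply continuity_pt_mult
  | |- continuity_pt (fun _ => - _) _ => apply continuity_pt_opp
  end;
  auto using continuity_pt_cst, continuity_pt_cos_mul, continuity_pt_sin_mul,
    continuity_pt_trigsum.

Lemma ex_RInt_continuity_pt f a b : (forall x, continuity_pt f x) -> ex_RInt f a b.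
Proof.
  intros Hf. apply (ex_RInt_continuous (V := R_CompleteNormedModule)).
  intros z _. now apply continuity_pt_filterlim.
Qed.

(* RInt_ext at the real line, so that its side goals are equalities in R that
   ring recognises. *)
Lemma RInt_ext_R (f g : R -> R) a b :
  (forall x, Rmin a b < x < Rmax a b -> f x = g x) -> RInt f a b = RInt g a b.
Proof. apply RInt_ext. Qed.

Lemma RInt_Rplus f g a b : ex_RInt f a b -> ex_RInt g a b ->
  RInt (fun x => f x + g x) a b = RInt f a b + RInt g a b.
Proof. exact (RInt_plus (V := R_CompleteNormedModule) f g a b). Qed.

Lemma RInt_Rminus f g a b : ex_RInt f a b -> ex_RInt g a b ->
  RInt (fun x => f x - g x) a b = RInt f a b - RInt g a b.
Proof. exact (RInt_minus (V := R_CompleteNormedModule) f g a b). Qed.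

Lemma RInt_Rmult_l k f a b : ex_RInt f a b ->
  RInt (fun x => k * f x) a b = k * RInt f a b.
Proof. exact (RInt_scal (V := R_CompleteNormedModule) f a b k). Qed.

Lemma RInt_Ropp f a b : ex_RInt f a b -> RInt (fun x => - f x) a b = - RInt f a b.
Proof. exact (RInt_opp (V := R_CompleteNormedModule) f a b). Qed.

Lemma RInt_sub_mul (g1 g2 w : R -> R) a b : (forall x, continuity_pt g1 x) ->
  (forall x, continuity_pt g2 x) -> (forall x, continuity_pt w x) ->
  RInt (fun y => (g1 y - g2 y) * w y) a b
  = RInt (fun y => g1 y * w y) a b - RInt (fun y => g2 y * w y) a b.
Proof.
  intros H1 H2 Hw. rewrite <- RInt_Rminus by (apply ex_RInt_continuity_pt; solve_continuity).
  apply RInt_ext_R. intros. ring.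
Qed.

Lemma Rint_RInt f a b : Riemann_integrable f a b -> Rint f a b = RInt f a b.
Proof.
  intros pr. unfold Rint.
  destruct (epsilon_spec (inhabits 0)
    (fun I => exists pr : Riemann_integrable f a b, RiemannInt pr = I)) as [pr' <-].
  { now exists (RiemannInt pr), pr. }
  symmetry. apply RInt_Reals.
Qed.

Lemma RInt_gt0_of_pt g a b x0 : (forall x, continuity_pt g x) -> (forall x, 0 <= g x) ->
  a < x0 < b -> 0 < g x0 -> 0 < RInt g a b.
Proof.
  intros Hc Hg Hx0 Hgx0.
  assert (Hex : forall u v, ex_RInt g u v) by (intros; now apply ex_RInt_continuity_pt).
  destruct (Hc x0 (g x0 / 2)) as [dl [Hdl Hnear]]; [lra|].
  set (e := Rmin (dl / 2) (Rmin ((x0 - a) / 2) ((b - x0) / 2))).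
  assert (He : 0 < e) by (unfold e; repeat apply Rmin_glb_lt; lra).
  assert (He1 : e <= dl / 2) by apply Rmin_l.
  assert (He2 : e <= (x0 - a) / 2) by (eapply Rle_trans; [apply Rmin_r | apply Rmin_l]).
  assert (He3 : e <= (b - x0) / 2) by (eapply Rle_trans; [apply Rmin_r | apply Rmin_r]).
  rewrite <- (RInt_Chasles g a (x0 - e) b), <- (RInt_Chasles g (x0 - e) (x0 + e) b) by auto.
  assert (0 <= RInt g a (x0 - e)) by (apply RInt_ge_0; auto; lra).
  assert (0 <= RInt g (x0 + e) b) by (apply RInt_ge_0; auto; lra).
  assert (0 < RInt g (x0 - e) (x0 + e)).
  { apply RInt_gt_0; [lra| |intros; now apply continuity_pt_filterlim].
    intros x Hx. destruct (Req_dec x x0) as [->|Hne]; [lra|].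
    assert (Hd : R_dist x x0 < dl) by (apply Rabs_def1; lra).
    specialize (Hnear x (conj (conj I (not_eq_sym Hne)) Hd)).
    apply Rabs_def2 in Hnear. simpl in Hnear. lra. }
  simpl. unfold plus; simpl. lra.
Qed.

Lemma ball0_Rabs (e u : R) : ball 0 e u -> Rabs u < e.
Proof. intros H. change (Rabs (u + - 0) < e) in H. now rewrite Ropp_0, Rplus_0_r in H. Qed.

Section ShiftDerivative.

Variables (f f' F c : R -> R).
Hypothesis f_deriv : forall z, 0 < z -> is_derive f z (f' z).
Hypothesis f'_cont : forall z, 0 < z -> continuity_pt f' z.
Hypothesis F_pos : forall s, 0 < F s.
Hypothesis F_cont : forall s, continuity_pt F s.
Hypothesis c_cont : forall s, continuity_pt c s.

(* The window [-1, 2] contains the unit neighbourhood of [0, 1] on which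
   is_derive_RInt_param needs the derivative in u to exist. *)
Lemma shift_pos_near0 :
  exists d, 0 < d /\ forall u s, Rabs u < d -> -1 <= s <= 2 -> 0 < F s + u * c s.
Proof.
  destruct (continuity_ab_min F (-1) 2) as [smin [HFmin _]]; [lra | auto |].
  destruct (continuity_ab_min (fun s => - Rabs (c s)) (-1) 2) as [smax [Hcmax _]]; [lra| |].
  { intros s _. apply continuity_pt_opp, (continuity_pt_comp c Rabs); auto.
    apply Rcontinuity_abs. }
  set (m := F smin) in *. set (C := Rabs (c smax)) in *.
  assert (Hm : 0 < m) by apply F_pos.
  assert (HC : 0 <= C) by apply Rabs_pos.
  exists (m / (C + 1)). split; [apply Rdiv_lt_0_compat; lra|].
  intros u s Hu Hs.
  assert (Hcs : Rabs (c s) <= C) by (specialize (Hcmax s Hs); lra).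
  assert (Hu' : Rabs u * (C + 1) < m).
  { apply (Rmult_lt_compat_r (C + 1)) in Hu; [|lra].
    unfold Rdiv in Hu. now rewrite Rmult_assoc, Rinv_l, Rmult_1_r in Hu by lra. }
  assert (Huc : Rabs (u * c s) < m).
  { rewrite Rabs_mult. pose proof (Rabs_pos u). pose proof (Rabs_pos (c s)). nra. }
  apply Rabs_def2 in Huc. specialize (HFmin s Hs). lra.
Qed.

Lemma continuity_pt_shift u z : 0 < F z + u * c z ->
  continuity_pt (fun y => f (F y + u * c y)) z.
Proof.
  intros Hz. apply (continuity_pt_comp (fun y => F y + u * c y) f); [solve_continuity|].
  apply derivable_continuous_pt. exists (f' (F z + u * c z)).
  now apply is_derive_Reals, f_deriv.
Qed.

Lemma is_derive_shift u t : 0 < F t + u * c t ->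
  is_derive (fun z => f (F t + z * c t)) u (f' (F t + u * c t) * c t).
Proof.
  intros Hp. rewrite Rmult_comm.
  apply (is_derive_comp f (fun z => F t + z * c t)); [now apply f_deriv|].
  auto_derive; [auto | ring].
Qed.

Lemma continuity_2d_pt_shift_derivative t :
  continuity_2d_pt (fun u v => f' (F v + u * c v) * c v) 0 t.
Proof.
  assert (Hsnd : forall g, (forall s, continuity_pt g s) ->
                 continuity_2d_pt (fun _ v => g v) 0 t).
  { intros g Hg. apply (continuity_1d_2d_pt_comp g (fun _ v => v)); auto.
    apply continuity_2d_pt_id2. }
  apply continuity_2d_pt_mult; [|now apply Hsnd].
  apply continuity_1d_2d_pt_comp.
  - apply f'_cont. rewrite Rmult_0_l, Rplus_0_r. auto.
  - apply continuity_2d_pt_plus; [now apply Hsnd|].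
    apply continuity_2d_pt_mult; [apply continuity_2d_pt_id1 | now apply Hsnd].
Qed.

Lemma is_derive_RInt_shift :
  is_derive (fun u => RInt (fun y => f (F y + u * c y)) 0 1) 0
    (RInt (fun y => f' (F y) * c y) 0 1).
Proof.
  destruct shift_pos_near0 as [d [Hd Hpos]].
  replace (RInt (fun y => f' (F y) * c y) 0 1)
    with (RInt (fun y => Derive (fun u => f (F y + u * c y)) 0) 0 1).
  2:{ apply RInt_ext. intros y _. apply is_derive_unique.
      pose proof (is_derive_shift 0 y) as H. rewrite Rmult_0_l, Rplus_0_r in H.
      now apply H. }
  apply (is_derive_RInt_param (fun u y => f (F y + u * c y))).
  - exists (mkposreal d Hd). intros u Hu t Ht. apply ball0_Rabs in Hu.
    rewrite Rmin_left, Rmax_right in Ht by lra.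
    eexists. apply is_derive_shift, Hpos; [exact Hu | lra].
  - intros t Ht. rewrite Rmin_left, Rmax_right in Ht by lra.
    apply continuity_2d_pt_ext_loc with (2 := continuity_2d_pt_shift_derivative t).
    assert (Hd1 : 0 < Rmin d 1) by (apply Rmin_glb_lt; lra).
    exists (mkposreal _ Hd1). intros u v Hu Hv. simpl in Hu, Hv.
    rewrite Rminus_0_r in Hu.
    pose proof (Rmin_l d 1). pose proof (Rmin_r d 1).
    assert (Hv' : Rabs (v - t) < 1) by lra. apply Rabs_def2 in Hv'.
    symmetry. apply is_derive_unique, is_derive_shift, Hpos; lra.
  - exists (mkposreal d Hd). intros u Hu. apply ball0_Rabs in Hu.
    apply (ex_RInt_continuous (V := R_CompleteNormedModule)). intros z Hz.
    rewrite Rmin_left, Rmax_right in Hz by lra.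
    apply continuity_pt_filterlim, continuity_pt_shift, Hpos; [exact Hu | lra].
Qed.

Lemma derivable_pt_lim_Rint_shift L :
  derivable_pt_lim (fun u => Rint (fun y => f (F y + u * c y)) 0 1) 0 L ->
  L = RInt (fun y => f' (F y) * c y) 0 1.
Proof.
  intros HL. apply is_derive_Reals in HL.
  destruct shift_pos_near0 as [d [Hd Hpos]].
  assert (HR : is_derive (fun u => RInt (fun y => f (F y + u * c y)) 0 1) 0 L).
  { apply is_derive_ext_loc with (2 := HL).
    exists (mkposreal d Hd). intros u Hu. apply ball0_Rabs in Hu.
    apply Rint_RInt, continuity_implies_RiemannInt; [lra|]. intros z Hz.
    apply continuity_pt_shift, Hpos; [exact Hu | lra]. }
  apply is_derive_unique in HR. rewrite <- HR.
  apply is_derive_unique, is_derive_RInt_shift.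
Qed.

End ShiftDerivative.

Definition dphi (alpha j z : R) : R := cj alpha j / Rpower z (1 / alpha).

Section PhiDerivative.

Variables alpha j : R.
Hypothesis alpha_pos : 0 < alpha.

Lemma is_derive_phi z : 0 < z -> is_derive (phi alpha j) z (dphi alpha j z).
Proof.
  intros Hz. apply is_derive_Reals. unfold phi, dphi.
  destruct (Req_EM_T alpha 1) as [->|Hne].
  - replace (1 / 1) with 1 by field. rewrite Rpower_1 by lra.
    apply derivable_pt_lim_scal with (f := ln). now apply derivable_pt_lim_ln.
  - set (e := (alpha - 1) / alpha).
    replace (cj alpha j / Rpower z (1 / alpha))
      with (cj alpha j * alpha / (alpha - 1) * (e * Rpower z (e - 1))).
    + apply derivable_pt_lim_scal with (f := fun t => Rpower t e).
      now apply derivable_pt_lim_power.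
    + unfold e. replace ((alpha - 1) / alpha - 1) with (- (1 / alpha)) by (field; lra).
      rewrite Rpower_Ropp. assert (0 < Rpower z (1 / alpha)) by apply exp_pos.
      assert (alpha - 1 <> 0) by lra.
      field. lra.
Qed.

Lemma continuity_pt_dphi z : 0 < z -> continuity_pt (dphi alpha j) z.
Proof.
  intros Hz. apply continuity_pt_mult; [apply continuity_pt_cst|].
  apply continuity_pt_inv; [|apply Rgt_not_eq, exp_pos].
  apply derivable_continuous_pt. exists (1 / alpha * Rpower z (1 / alpha - 1)).
  now apply derivable_pt_lim_power.
Qed.

Lemma dphi_decreasing x y : 0 < x < y -> dphi alpha j y < dphi alpha j x.
Proof.
  intros Hxy. apply Rmult_lt_compat_l; [apply exp_pos|].
  apply Rinv_lt_contravar; [apply Rmult_lt_0_compat; apply exp_pos|].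
  apply Rlt_Rpower_l; [apply Rdiv_lt_0_compat|]; lra.
Qed.

Lemma dphi_sub_mul_sub_le0 x y : 0 < x -> 0 < y ->
  (dphi alpha j x - dphi alpha j y) * (x - y) <= 0.
Proof.
  intros Hx Hy. destruct (Rtotal_order x y) as [H|[->|H]].
  - pose proof (dphi_decreasing x y (conj Hx H)). nra.
  - lra.
  - pose proof (dphi_decreasing y x (conj Hy H)). nra.
Qed.

Lemma dphi_sub_mul_sub_lt0 x y : 0 < x -> 0 < y -> x <> y ->
  (dphi alpha j x - dphi alpha j y) * (x - y) < 0.
Proof.
  intros Hx Hy Hne. destruct (Rtotal_order x y) as [H|[H|H]]; [|contradiction|].
  - pose proof (dphi_decreasing x y (conj Hx H)). nra.
  - pose proof (dphi_decreasing y x (conj Hy H)). nra.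
Qed.

End PhiDerivative.

Lemma trigsum_ext n a b a' b' y :
  (forall i, (1 <= i <= n)%nat -> a' i = a i /\ b' i = b i) ->
  trigsum n a' b' y = trigsum n a b y.
Proof.
  induction n as [|n IH]; intros H; simpl; [reflexivity|].
  rewrite IH by (intros i Hi; apply H; lia).
  destruct (H (S n)) as [-> ->]; [lia | reflexivity].
Qed.

Lemma trigsum_upd_a n a b k v y : (1 <= k <= n)%nat ->
  trigsum n (upd a k v) b y = trigsum n a b y + (v - a k) * cos (2 * PI * INR k * y).
Proof.
  induction n as [|n IH]; intros Hk; [lia|]. cbn [trigsum].
  destruct (Nat.eq_dec k (S n)) as [->|Hne].
  - rewrite (trigsum_ext n a b).
    2:{ intros i Hi. unfold upd. destruct (Nat.eqb_spec i (S n)); [lia | auto]. }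
    unfold upd. rewrite Nat.eqb_refl. ring.
  - rewrite IH by lia. unfold upd at 1.
    destruct (Nat.eqb_spec (S n) k); [lia | ring].
Qed.

Lemma trigsum_upd_b n a b k v y : (1 <= k <= n)%nat ->
  trigsum n a (upd b k v) y = trigsum n a b y + (v - b k) * sin (2 * PI * INR k * y).
Proof.
  induction n as [|n IH]; intros Hk; [lia|]. cbn [trigsum].
  destruct (Nat.eq_dec k (S n)) as [->|Hne].
  - rewrite (trigsum_ext n a b).
    2:{ intros i Hi. unfold upd. destruct (Nat.eqb_spec i (S n)); [lia | auto]. }
    unfold upd. rewrite Nat.eqb_refl. ring.
  - rewrite IH by lia. unfold upd at 1.
    destruct (Nat.eqb_spec (S n) k); [lia | ring].
Qed.

Lemma trig_sub n a b a' b' y :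
  trig n (fun i => a i - a' i) (fun i => b i - b' i) y = trig n a b y - trig n a' b' y.
Proof.
  unfold trig. enough (trigsum n (fun i => a i - a' i) (fun i => b i - b' i) y
                       = trigsum n a b y - trigsum n a' b' y) as -> by ring.
  induction n as [|n IH]; simpl; [ring|]. rewrite IH. ring.
Qed.

Lemma RInt_mul_trigsum_ge0 G m a b : (forall x, continuity_pt G x) ->
  (forall k, (1 <= k <= m)%nat ->
     0 <= a k * RInt (fun y => G y * cos (2 * PI * INR k * y)) 0 1
          + b k * RInt (fun y => G y * sin (2 * PI * INR k * y)) 0 1) ->
  0 <= RInt (fun y => G y * trigsum m a b y) 0 1.
Proof.
  intros HG. induction m as [|m IH]; intros Hk; cbn [trigsum].
  - apply RInt_ge_0; [lra | apply ex_RInt_continuity_pt; solve_continuity |].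
    intros. rewrite Rmult_0_r. lra.
  - rewrite (RInt_ext_R _ (fun y => G y * trigsum m a b y
               + (a (S m) * (G y * cos (2 * PI * INR (S m) * y))
                  + b (S m) * (G y * sin (2 * PI * INR (S m) * y)))))
      by (intros; ring).
    rewrite !RInt_Rplus, !RInt_Rmult_l by (apply ex_RInt_continuity_pt; solve_continuity).
    specialize (IH ltac:(intros; apply Hk; lia)). specialize (Hk (S m) ltac:(lia)).
    lra.
Qed.

Definition profile (n : nat) (V : R -> R) (a b : nat -> R) (y : R) : R := trig n a b y - V y.

Section PhiShift.

Variables (alpha j : R) (n : nat) (V : R -> R) (a b : nat -> R).

Lemma Phi_shift_a0 t :
  Phi alpha j n V (upd a 0 (a 0%nat + t)) b
  = Rint (fun y => phi alpha j (profile n V a b y + t * 1)) 0 1.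
Proof.
  unfold Phi, profile, trig. f_equal. apply functional_extensionality. intros y.
  rewrite (trigsum_ext n a b).
  2:{ intros i Hi. unfold upd. destruct (Nat.eqb_spec i 0); [lia | auto]. }
  f_equal. unfold upd. simpl. ring.
Qed.

Lemma Phi_shift_a k t : (1 <= k <= n)%nat ->
  Phi alpha j n V (upd a k (a k + t)) b
  = Rint (fun y => phi alpha j (profile n V a b y + t * cos (2 * PI * INR k * y))) 0 1.
Proof.
  intros Hk. unfold Phi, profile, trig. f_equal. apply functional_extensionality. intros y.
  rewrite trigsum_upd_a by exact Hk. unfold upd at 1.
  destruct (Nat.eqb_spec 0 k); [lia|]. f_equal. ring.
Qed.

Lemma Phi_shift_b k t : (1 <= k <= n)%nat ->
  Phi alpha j n V a (upd b k (b k + t))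
  = Rint (fun y => phi alpha j (profile n V a b y + t * sin (2 * PI * INR k * y))) 0 1.
Proof.
  intros Hk. unfold Phi, profile, trig. f_equal. apply functional_extensionality. intros y.
  rewrite trigsum_upd_b by exact Hk. f_equal. ring.
Qed.

End PhiShift.

Section Moments.

Variables (alpha j : R) (n : nat) (V : R -> R) (p q a b : nat -> R).
Hypothesis alpha_pos : 0 < alpha.
Hypothesis V_cont : forall x, continuity_pt V x.
Hypothesis ab_in : inC n V a b.
Hypothesis ab_sol : solves_S alpha j n V p q a b.

Local Notation F := (profile n V a b).

Lemma profile_pos x : 0 < F x.
Proof. specialize (ab_in x). unfold profile. lra. Qed.

Lemma continuity_pt_profile x : continuity_pt F x.
Proof. unfold profile, trig. solve_continuity. Qed.

Lemma continuity_pt_dphi_profile x : continuity_pt (fun y => dphi alpha j (F y)) x.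
Proof.
  apply (continuity_pt_comp F (dphi alpha j)); [apply continuity_pt_profile|].
  apply continuity_pt_dphi, profile_pos.
Qed.

Lemma moment_of_derivable_shift (c : R -> R) L : (forall x, continuity_pt c x) ->
  derivable_pt_lim (fun t => Rint (fun y => phi alpha j (F y + t * c y)) 0 1) 0 L ->
  RInt (fun y => dphi alpha j (F y) * c y) 0 1 = L.
Proof.
  intros Hc HL. symmetry.
  apply (derivable_pt_lim_Rint_shift (phi alpha j) (dphi alpha j) F c);
    auto using is_derive_phi, continuity_pt_dphi, profile_pos, continuity_pt_profile.
Qed.

Lemma moment_const : RInt (fun y => dphi alpha j (F y)) 0 1 = 1.
Proof.
  destruct ab_sol as [H0 _].
  transitivity (RInt (fun y => dphi alpha j (F y) * 1) 0 1).
  - apply RInt_ext_R. intros. ring.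
  - apply moment_of_derivable_shift; [solve_continuity|].
    replace (fun t => Rint (fun y => phi alpha j (F y + t * 1)) 0 1)
      with (fun t => Phi alpha j n V (upd a 0 (a 0%nat + t)) b); [exact H0|].
    apply functional_extensionality. intros t. apply Phi_shift_a0.
Qed.

Lemma moment_cos k : (1 <= k <= n)%nat ->
  RInt (fun y => dphi alpha j (F y) * cos (2 * PI * INR k * y)) 0 1
  = (p k * a k + q k * b k) / (p k ^ 2 + q k ^ 2).
Proof.
  intros Hk. destruct ab_sol as [_ [Ha _]].
  apply moment_of_derivable_shift; [solve_continuity|].
  replace (fun t => Rint (fun y => phi alpha j (F y + t * cos (2 * PI * INR k * y))) 0 1)
    with (fun t => Phi alpha j n V (upd a k (a k + t)) b); [exact (Ha k Hk)|].
  apply functional_extensionality. intros t. now apply Phi_shift_a.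
Qed.

Lemma moment_sin k : (1 <= k <= n)%nat ->
  RInt (fun y => dphi alpha j (F y) * sin (2 * PI * INR k * y)) 0 1
  = (p k * b k - q k * a k) / (p k ^ 2 + q k ^ 2).
Proof.
  intros Hk. destruct ab_sol as [_ [_ Hb]].
  apply moment_of_derivable_shift; [solve_continuity|].
  replace (fun t => Rint (fun y => phi alpha j (F y + t * sin (2 * PI * INR k * y))) 0 1)
    with (fun t => Phi alpha j n V a (upd b k (b k + t))); [exact (Hb k Hk)|].
  apply functional_extensionality. intros t. now apply Phi_shift_b.
Qed.

End Moments.

(* (p a + q b, p b - q a) / (p^2 + q^2) is the complex quotient (a + i b) / (p + i q). *)
Lemma div_pq_pairing_ge0 p q a1 b1 a2 b2 : 0 <= p -> p ^ 2 + q ^ 2 > 0 ->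
  0 <= (a1 - a2) * ((p * a1 + q * b1) / (p ^ 2 + q ^ 2) - (p * a2 + q * b2) / (p ^ 2 + q ^ 2))
     + (b1 - b2) * ((p * b1 - q * a1) / (p ^ 2 + q ^ 2) - (p * b2 - q * a2) / (p ^ 2 + q ^ 2)).
Proof.
  intros Hp HN.
  replace (_ + _) with (p * ((a1 - a2) ^ 2 + (b1 - b2) ^ 2) / (p ^ 2 + q ^ 2)) by (field; lra).
  apply Rdiv_le_0_compat; [|lra].
  apply Rmult_le_pos; [exact Hp|]. apply Rplus_le_le_0_compat; apply pow2_ge_0.
Qed.

Lemma div_pq_inj p q a1 b1 a2 b2 : p ^ 2 + q ^ 2 > 0 ->
  (p * a1 + q * b1) / (p ^ 2 + q ^ 2) = (p * a2 + q * b2) / (p ^ 2 + q ^ 2) ->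
  (p * b1 - q * a1) / (p ^ 2 + q ^ 2) = (p * b2 - q * a2) / (p ^ 2 + q ^ 2) ->
  a1 = a2 /\ b1 = b2.
Proof.
  intros HN E1 E2.
  apply Rmult_eq_reg_r in E1; [|apply Rinv_neq_0_compat; lra].
  apply Rmult_eq_reg_r in E2; [|apply Rinv_neq_0_compat; lra].
  assert (Ha : (p ^ 2 + q ^ 2) * (a1 - a2) = 0).
  { transitivity (p * ((p * a1 + q * b1) - (p * a2 + q * b2))
                  - q * ((p * b1 - q * a1) - (p * b2 - q * a2))); [ring|].
    rewrite E1, E2. ring. }
  assert (Hb : (p ^ 2 + q ^ 2) * (b1 - b2) = 0).
  { transitivity (q * ((p * a1 + q * b1) - (p * a2 + q * b2))
                  + p * ((p * b1 - q * a1) - (p * b2 - q * a2))); [ring|].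
    rewrite E1, E2. ring. }
  apply Rmult_integral in Ha. apply Rmult_integral in Hb. lra.
Qed.

Section Uniqueness.

Variables (alpha j : R) (n : nat) (V : R -> R) (p q c1 d1 c2 d2 : nat -> R).
Hypothesis alpha_pos : 0 < alpha.
Hypothesis V_cont : forall x, continuity_pt V x.
Hypothesis p_ge0 : forall k, (1 <= k <= n)%nat -> 0 <= p k.
Hypothesis pq_pos : forall k, (1 <= k <= n)%nat -> p k ^ 2 + q k ^ 2 > 0.
Hypotheses (in1 : inC n V c1 d1) (in2 : inC n V c2 d2).
Hypotheses (sol1 : solves_S alpha j n V p q c1 d1) (sol2 : solves_S alpha j n V p q c2 d2).

Local Notation F1 := (profile n V c1 d1).
Local Notation F2 := (profile n V c2 d2).

Lemma continuity_pt_dphi_profiles x :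
  continuity_pt (fun y => dphi alpha j (F1 y)) x /\
  continuity_pt (fun y => dphi alpha j (F2 y)) x.
Proof. split; now apply continuity_pt_dphi_profile. Qed.

Lemma RInt_dphi_gap_ge0 :
  0 <= RInt (fun y => (dphi alpha j (F1 y) - dphi alpha j (F2 y)) * (F1 y - F2 y)) 0 1.
Proof.
  set (ha := fun i => c1 i - c2 i). set (hb := fun i => d1 i - d2 i).
  set (G := fun y => dphi alpha j (F1 y) - dphi alpha j (F2 y)).
  assert (HG : forall x, continuity_pt G x)
    by (intros x; destruct (continuity_pt_dphi_profiles x); now apply continuity_pt_minus).
  rewrite (RInt_ext_R _ (fun y => ha 0%nat * G y + G y * trigsum n ha hb y)).
  2:{ intros y _. replace (F1 y - F2 y) with (trig n ha hb y)
        by (unfold profile, ha, hb; rewrite trig_sub; ring).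
      unfold trig, G. ring. }
  rewrite RInt_Rplus, RInt_Rmult_l by (apply ex_RInt_continuity_pt; solve_continuity).
  unfold G at 1.
  rewrite RInt_Rminus by (apply ex_RInt_continuity_pt;
    intros x; now destruct (continuity_pt_dphi_profiles x)).
  rewrite (moment_const alpha j n V p q c1 d1), (moment_const alpha j n V p q c2 d2) by auto.
  rewrite Rminus_diag, Rmult_0_r, Rplus_0_l.
  apply RInt_mul_trigsum_ge0; [exact HG|]. intros k Hk.
  unfold G. rewrite !RInt_sub_mul by (intros x;
    destruct (continuity_pt_dphi_profiles x); solve_continuity).
  rewrite (moment_cos alpha j n V p q c1 d1), (moment_cos alpha j n V p q c2 d2),
    (moment_sin alpha j n V p q c1 d1), (moment_sin alpha j n V p q c2 d2) by auto.
  apply div_pq_pairing_ge0; auto.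
Qed.

Lemma profiles_eq x : 0 < x < 1 -> F1 x = F2 x.
Proof.
  intros Hx. destruct (Req_dec (F1 x) (F2 x)) as [|Hne]; [assumption|exfalso].
  set (g := fun y => (dphi alpha j (F1 y) - dphi alpha j (F2 y)) * (F1 y - F2 y)).
  assert (Hg : forall y, continuity_pt g y).
  { intros y. destruct (continuity_pt_dphi_profiles y).
    unfold g. solve_continuity; now apply continuity_pt_profile. }
  assert (Hneg : 0 < RInt (fun y => - g y) 0 1).
  { apply (RInt_gt0_of_pt _ 0 1 x); [solve_continuity | | exact Hx |].
    - intros y. unfold g. pose proof (dphi_sub_mul_sub_le0 alpha j alpha_pos (F1 y) (F2 y)).
      pose proof (profile_pos n V c1 d1 in1 y). pose proof (profile_pos n V c2 d2 in2 y).
      lra.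
    - unfold g. pose proof (dphi_sub_mul_sub_lt0 alpha j alpha_pos (F1 x) (F2 x)).
      pose proof (profile_pos n V c1 d1 in1 x). pose proof (profile_pos n V c2 d2 in2 x).
      lra. }
  rewrite RInt_Ropp in Hneg by now apply ex_RInt_continuity_pt.
  pose proof RInt_dphi_gap_ge0. unfold g in Hneg. lra.
Qed.

Lemma coefficients_eq k : (1 <= k <= n)%nat -> c1 k = c2 k /\ d1 k = d2 k.
Proof.
  intros Hk.
  assert (Hw : forall w : R -> R, RInt (fun y => dphi alpha j (F1 y) * w y) 0 1
                                  = RInt (fun y => dphi alpha j (F2 y) * w y) 0 1).
  { intros w. apply RInt_ext_R. intros y Hy.
    rewrite Rmin_left, Rmax_right in Hy by lra. now rewrite profiles_eq. }
  apply (div_pq_inj (p k) (q k)); [auto | |].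
  - rewrite <- (moment_cos alpha j n V p q c1 d1), <- (moment_cos alpha j n V p q c2 d2) by auto.
    apply Hw.
  - rewrite <- (moment_sin alpha j n V p q c1 d1), <- (moment_sin alpha j n V p q c2 d2) by auto.
    apply Hw.
Qed.

Lemma constant_coefficient_eq : c1 0%nat = c2 0%nat.
Proof.
  pose proof (profiles_eq (1 / 2) ltac:(lra)) as H. unfold profile, trig in H.
  rewrite (trigsum_ext n c2 d2 c1 d1) in H by (intros; now apply coefficients_eq).
  lra.
Qed.

End Uniqueness.

Theorem proposition4p2 (alpha j : R) (n : nat) (V : R -> R) (p q : nat -> R)
  (c1 d1 c2 d2 : nat -> R) :
  0 < alpha <= 2 ->
  j <> 0 ->
  C2_torus V ->
  (forall k, (1 <= k <= n)%nat -> 0 <= p k) ->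
  (forall k, (1 <= k <= n)%nat -> p k ^ 2 + q k ^ 2 > 0) ->
  inC n V c1 d1 -> inC n V c2 d2 ->
  solves_S alpha j n V p q c1 d1 ->
  solves_S alpha j n V p q c2 d2 ->
  (forall k, (k <= n)%nat -> c1 k = c2 k) /\
  (forall k, (1 <= k <= n)%nat -> d1 k = d2 k).
Proof.
  intros [Ha _] _ HV Hp Hpq Hin1 Hin2 Hsol1 Hsol2.
  pose proof (C2_torus_continuity V HV) as HVc.
  split.
  - intros [|k] Hk.
    + exact (constant_coefficient_eq alpha j n V p q c1 d1 c2 d2 Ha HVc Hp Hpq
               Hin1 Hin2 Hsol1 Hsol2).
    + apply (coefficients_eq alpha j n V p q c1 d1 c2 d2); auto. lia.
  - intros k Hk. apply (coefficients_eq alpha j n V p q c1 d1 c2 d2); auto.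
Qed.
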